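(* Let $k\ge 2$ be an integer, let $\chi$ be a set, and let $d_H:\chi^k\to[0,\infty)$ be an $H$-metric with parameter $\gamma$. Define $d:\chi^2\to[0,\infty)$ by $$d(p_1,p_2):=d_H(p_1,\underbrace{p_2,\ldots,p_2}_{k-1})+d_H(p_2,\underbrace{p_1,\ldots,p_1}_{k-1}).$$ Then $d$ is a metric on $\chi$ (symmetric, $d(p,q)\ge 0$ with equality iff $p=q$, and satisfying the triangle inequality), and for all $p_1,\ldots,p_k\in\chi$ and every $v\in\{p_1,\ldots,p_k\}$, $$\frac{1}{\gamma k^2}\sum_{i=1}^{k-1}\sum_{j=i+1}^{k} d(p_i,p_j)\;\le\; d_H(p_1,\ldots,p_k)\;\le\;\sum_{i=1}^k d(v,p_i).$$
   Context: For a multiset $S$ of elements of $\chi$, $elem(S)$ denotes the set of distinct elements of $S$. An $H$-metric with parameter $\gamma$ (where $\gamma$ is an integer with $1\le\gamma\le k-1$) is a function $d_H:\chi^k\to[0,\infty)$ satisfying: ($\Pi$) $d_H(p_1,\ldots,p_k)$ is invariant under permuting its arguments; ($O_D$) $d_H(p_1,\ldots,p_k)\ge 0$, with equality if and only if $p_1=\cdots=p_k$; ($\Delta_H$) for all $p_1,\ldots,p_k,a\in\chi$ and all $i\in\{1,\ldots,k\}$, $d_H(p_1,\ldots,p_k)\le d_H(p_1,\ldots,p_i,a,\ldots,a)+d_H(a,\ldots,a,p_{i+1},\ldots,p_k)$, where $a$ appears $k-i$ times in the first term and $i$ times in the second; ($\mathcal S_H$) for all $p_1,\ldots,p_k,p'_1,\ldots,p'_k\in\chi$: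 if $elem(\{p_1,\ldots,p_k\})\subsetneq elem(\{p'_1,\ldots,p'_k\})$ then $d_H(p_1,\ldots,p_k)\le d_H(p'_1,\ldots,p'_k)$, and if $elem(\{p_1,\ldots,p_k\})= elem(\{p'_1,\ldots,p'_k\})$ then $d_H(p_1,\ldots,p_k)\le \gamma\, d_H(p'_1,\ldots,p'_k)$. *)

From HB Require Import structures.
From mathcomp Require Import all_boot all_order all_algebra all_fingroup.
Set Implicit Arguments. Unset Strict Implicit. Unset Printing Implicit Defensive.
Import Order.TTheory GRing.Theory Num.Theory.
Local Open Scope ring_scope.

Definition elem (chi : Type) (k : nat) (p : 'I_k -> chi) (x : chi) : Prop :=
  exists i : 'I_k, p i = x.

Definition elem_subset (chi : Type) (k : nat) (p q : 'I_k -> chi) : Prop :=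
  forall x, elem p x -> elem q x.

Definition elem_ssubset (chi : Type) (k : nat) (p q : 'I_k -> chi) : Prop :=
  elem_subset p q /\ ~ elem_subset q p.

Definition elem_eq (chi : Type) (k : nat) (p q : 'I_k -> chi) : Prop :=
  elem_subset p q /\ elem_subset q p.

Definition prefix_fill (chi : Type) (k : nat) (i : nat) (p : 'I_k -> chi) (a : chi)
  : 'I_k -> chi := fun j => if (j < i)%N then p j else a.
Definition suffix_fill (chi : Type) (k : nat) (i : nat) (p : 'I_k -> chi) (a : chi)
  : 'I_k -> chi := fun j => if (j < i)%N then a else p j.

Definition is_Hmetric (R : realFieldType) (chi : Type) (k : nat) (gamma : nat)
  (dH : ('I_k -> chi) -> R) : Prop :=
  [/\ (1 <= gamma <= k.-1)%N,
      (forall (s : 'S_k) (p : 'I_k -> chi), dH (fun i => p (s i)) = dH p),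
      (forall p, 0 <= dH p /\ (dH p = 0 <-> forall i j, p i = p j)),
      (forall (p : 'I_k -> chi) (a : chi) (i : nat), (1 <= i <= k)%N ->
          dH p <= dH (prefix_fill i p a) + dH (suffix_fill i p a))
    & (forall p q : 'I_k -> chi,
          (elem_ssubset p q -> dH p <= dH q) /\
          (elem_eq p q -> dH p <= gamma%:R * dH q))].

Definition pair_tuple (chi : Type) (k : nat) (x y : chi) : 'I_k -> chi :=
  fun j => if val j == 0%N then x else y.

Definition dist_of (R : realFieldType) (chi : Type) (k : nat)
  (dH : ('I_k -> chi) -> R) (x y : chi) : R :=
  dH (pair_tuple x y) + dH (pair_tuple y x).

From HB Require Import structures.
From mathcomp Require Import all_boot all_order all_algebra all_fingroup.
From mathcomp Require Import lra.
From Stdlib Require Import FunctionalExtensionality Classical.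
Import Order.TTheory GRing.Theory Num.Theory.
Local Open Scope ring_scope.

(* Applying Delta_H with i = 1 to (x, z, ..., z) and a = y gives the
   triangle inequality for the directed distance dH (x, y, ..., y), hence for its
   symmetrisation d.  For the upper bound, Delta_H peels the entries of p off one
   at a time, replacing them by v; the discarded tuples (v, ..., p_j, ..., v) are
   permutations of (p_j, v, ..., v).  For the lower bound, every (p_i, p_j, ..., p_j)
   has its elements among those of p, so S_H bounds its value by gamma dH p, and
   there are at most k^2 such directed terms.  The upper bound holds for every v,
   whether or not it is an entry of p. *)

Lemma sum_ltn_pairs_le (R : numDomainType) (n : nat) (f : 'I_n -> 'I_n -> R) :
  (forall i j, 0 <= f i j) ->
  \sum_(i < n) \sum_(j < n | (i < j)%N) (f i j + f j i) <= \sum_(i < n) \sum_(j < n) f i j.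
Proof.
move=> f_ge0; under eq_bigr do rewrite big_split /=.
rewrite big_split /=; under [X in _ + X]eq_bigr do rewrite big_mkcond /=.
rewrite [X in _ + X]exchange_big /=; under eq_bigr do rewrite big_mkcond /=.
rewrite -big_split; apply: ler_sum => i _; rewrite -big_split; apply: ler_sum => j _.
by case: (ltngtP i j) => _; rewrite /= ?addr0 ?add0r.
Qed.

Section HmetricFacts.

Variables (R : realFieldType) (chi : Type) (k : nat) (dH : ('I_k -> chi) -> R).

Hypothesis dH_perm : forall (s : 'S_k) (p : 'I_k -> chi), dH (fun i => p (s i)) = dH p.
Hypothesis dH_ge0 : forall p, 0 <= dH p.
Hypothesis dH_eq0 : forall p, dH p = 0 <-> forall i j, p i = p j.
Hypothesis dH_triangle : forall (p : 'I_k -> chi) (a : chi) (i : nat), (1 <= i <= k)%N ->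
  dH p <= dH (prefix_fill i p a) + dH (suffix_fill i p a).

Local Notation d := (dist_of dH).

Lemma dH_const (v : chi) : dH (fun _ => v) = 0.
Proof. exact/dH_eq0. Qed.

Lemma dH_pair_diag (x : chi) : dH (pair_tuple x x) = 0.
Proof. by apply/dH_eq0 => i j; rewrite /pair_tuple; case: ifP; case: ifP. Qed.

Lemma dH_pair_eq0 (x y : chi) : (2 <= k)%N -> dH (pair_tuple x y) = 0 -> x = y.
Proof. by move=> k2 /dH_eq0 /(_ (Ordinal (ltnW k2)) (Ordinal k2)). Qed.

Lemma dH_pair_triangle (x y z : chi) : (0 < k)%N ->
  dH (pair_tuple x z) <= dH (pair_tuple x y) + dH (pair_tuple y z).
Proof.
move=> k0; have := dH_triangle (pair_tuple x z) y 1 k0.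
have -> : prefix_fill 1 (pair_tuple x z) y = pair_tuple x y :> ('I_k -> chi).
  by apply: functional_extensionality => -[[|j] ?].
have -> // : suffix_fill 1 (pair_tuple x z) y = pair_tuple y z :> ('I_k -> chi).
by apply: functional_extensionality => -[[|j] ?].
Qed.

Lemma dist_ofC (x y : chi) : d x y = d y x.
Proof. by rewrite /dist_of addrC. Qed.

Lemma dist_of_ge0 (x y : chi) : 0 <= d x y.
Proof. exact: addr_ge0. Qed.

Lemma dist_of_eq0 (x y : chi) : (2 <= k)%N -> d x y = 0 <-> x = y.
Proof.
move=> k2; split; last by move=> ->; rewrite /dist_of dH_pair_diag addr0.
move/eqP; rewrite paddr_eq0 // => /andP[/eqP dxy _].
exact: dH_pair_eq0 dxy.
Qed.

Lemma dist_of_triangle (x y z : chi) : (0 < k)%N -> d x z <= d x y + d y z.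
Proof.
move=> k0; rewrite /dist_of.
have := dH_pair_triangle x y z k0; have := dH_pair_triangle z y x k0; lra.
Qed.

Lemma dH_single (m : 'I_k) (x v : chi) :
  dH (fun j => if j == m then x else v) = dH (pair_tuple x v).
Proof.
have k0 : (0 < k)%N by apply: leq_ltn_trans (ltn_ord m).
set o0 := Ordinal k0.
rewrite -(dH_perm (tperm o0 m)); congr dH; apply: functional_extensionality => j /=.
by rewrite -[X in _ == X](tpermL o0 m) (inj_eq perm_inj) /pair_tuple -val_eqE.
Qed.

Lemma dH_peel (n : nat) (nk : (n < k)%N) (q : 'I_k -> chi) (v : chi) :
  (forall j : 'I_k, (n < j)%N -> q j = v) ->
  dH q <= dH (prefix_fill n q v) + dH (pair_tuple (q (Ordinal nk)) v).
Proof.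
move=> q_v; rewrite -(dH_single (Ordinal nk)).
have -> : (fun j => if j == Ordinal nk then q (Ordinal nk) else v) = suffix_fill n q v.
  apply: functional_extensionality => j; rewrite /suffix_fill -val_eqE /=.
  case: ltngtP => [//|/q_v //|eq_jn]; by rewrite (_ : j = Ordinal nk) //; apply: val_inj.
case: n nk q_v => [|n] nk q_v; last by apply: dH_triangle; rewrite /= ltnW.
by rewrite [prefix_fill _ _ _]/prefix_fill dH_const add0r.
Qed.

Lemma dH_le_sum_pair (v : chi) (n : nat) (q : 'I_k -> chi) : (n <= k)%N ->
  (forall j : 'I_k, (n <= j)%N -> q j = v) ->
  dH q <= \sum_(j < k | (j < n)%N) dH (pair_tuple (q j) v).
Proof.
elim: n q => [|n IH] q nk q_v.
  by rewrite big_pred0 // (dH_eq0 q).2 // => i j; rewrite !q_v.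
apply: le_trans (dH_peel _ nk _ _ q_v) _.
rewrite (bigD1 (Ordinal nk)) //= addrC lerD2r.
have q'_v (j : 'I_k) : (n <= j)%N -> prefix_fill n q v j = v.
  by rewrite /prefix_fill ltnNge => ->.
suff <- : \sum_(j < k | (j < n)%N) dH (pair_tuple (prefix_fill n q v j) v)
        = \sum_(j < k | (j < n.+1)%N && (j != Ordinal nk)) dH (pair_tuple (q j) v).
  exact: IH (ltnW nk) q'_v.
apply: eq_big => j; first by rewrite -val_eqE /= ltnS ltn_neqAle andbC.
by rewrite /prefix_fill => ->.
Qed.

Lemma dH_le_sum_dist (p : 'I_k -> chi) (v : chi) : dH p <= \sum_(i < k) d v (p i).
Proof.
apply: le_trans (dH_le_sum_pair v k p (leqnn k) _) _.
  by move=> j; rewrite leqNgt ltn_ord.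
rewrite big_mkcond /=; apply: ler_sum => j _; rewrite ltn_ord /dist_of lerDr.
exact: dH_ge0.
Qed.

Variable gamma : nat.
Hypothesis gamma_ge1 : (1 <= gamma)%N.
Hypothesis dH_ssubset : forall p q : 'I_k -> chi, elem_ssubset p q -> dH p <= dH q.
Hypothesis dH_elem_eq : forall p q : 'I_k -> chi, elem_eq p q -> dH p <= gamma%:R * dH q.

Lemma dH_le_gamma (p q : 'I_k -> chi) : elem_subset p q -> dH p <= gamma%:R * dH q.
Proof.
move=> pq; case: (classic (elem_subset q p)) => [qp|not_qp].
  exact: dH_elem_eq _ _ (conj pq qp).
apply: le_trans (dH_ssubset _ _ (conj pq not_qp)) _.
by rewrite ler_peMl // ler1n.
Qed.

Lemma dH_pair_le_gamma (p : 'I_k -> chi) (i j : 'I_k) :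
  dH (pair_tuple (p i) (p j)) <= gamma%:R * dH p.
Proof.
apply: dH_le_gamma => x [l <-].
by rewrite /pair_tuple; case: ifP => _; [exists i | exists j].
Qed.

Lemma sum_dist_le (p : 'I_k -> chi) :
  \sum_(i < k) \sum_(j < k | (i < j)%N) d (p i) (p j) <= gamma%:R * k%:R ^+ 2 * dH p.
Proof.
rewrite /dist_of.
apply: le_trans (sum_ltn_pairs_le _ _ (fun i j => dH (pair_tuple (p i) (p j))) _) _ => //.
apply: le_trans (_ : \sum_(i < k) \sum_(j < k) gamma%:R * dH p <= _).
  by do 2!apply: ler_sum => ? _; apply: dH_pair_le_gamma.
by rewrite !sumr_const card_ord -mulrnA -[_ *+ (k * k)]mulr_natr natrM -expr2 mulrAC.
Qed.

End HmetricFacts.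

Theorem theorem1 (R : realFieldType) (chi : Type) (k gamma : nat)
  (dH : ('I_k -> chi) -> R) :
  (2 <= k)%N -> is_Hmetric gamma dH ->
  let d := dist_of dH in
  ((forall x y, d x y = d y x) /\
   (forall x y, 0 <= d x y) /\
   (forall x y, d x y = 0 <-> x = y) /\
   (forall x y z, d x z <= d x y + d y z)) /\
  (forall (p : 'I_k -> chi) (v : chi), elem p v ->
     (gamma%:R * (k%:R ^+ 2))^-1 *
       (\sum_(i < k) \sum_(j < k | (i < j)%N) d (p i) (p j)) <= dH p /\
     dH p <= \sum_(i < k) d v (p i)).
Proof.
move=> k2 [/andP[gamma_ge1 _] dH_perm dH_O dH_triangle dH_S] d.
have dH_ge0 p : 0 <= dH p := (dH_O p).1.
have dH_eq0 p := (dH_O p).2.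
have k0 : (0 < k)%N := ltnW k2.
split.
{ split; [exact: dist_ofC | split; [exact: dist_of_ge0 | split]].
  - by move=> x y; apply: dist_of_eq0.
  - by move=> x y z; apply: dist_of_triangle. }
move=> p v _; split; last exact: dH_le_sum_dist.
rewrite ler_pdivrMl; last by rewrite mulr_gt0 ?exprn_gt0 ?ltr0n.
exact: sum_dist_le (fun p q => (dH_S p q).1) (fun p q => (dH_S p q).2) p.
Qed.
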